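(* Let $\mathcal{X}$ be a domain, $\mathcal{Y}=\{\pm1\}$, $\mathcal{F}$ a hypothesis class of functions $\mathcal{X}\to\mathcal{Y}$ with finite VC dimension $d$, and $\mathcal{P}$ an unknown distribution on $\mathcal{X}\times\mathcal{Y}$. Let $S_m$ be a sample of size $m$ drawn i.i.d. from $\mathcal{P}$, let $0<\delta<1$, and let $G$ be the low-error set computed by ILESS on input $(S_m,\delta,\mathcal{F},d)$. Suppose the event $\mathcal{E}$ occurred. Then every true risk minimizer $f^*\in\mathcal{F}$ belongs to $G$; consequently the selective classifier output by ILESS is pointwise-competitive (and this holds with probability at least $1-\delta$).
   Context: Risks: for $f\in\mathcal{F}$, $R(f)=\Pr_{(X,Y)\sim\mathcal{P}}[f(X)\neq Y]$; for a sample $S=((x_1,y_1),\dots,(x_m,y_m))$, $\hat R(f,S)=\frac1m\sum_{i=1}^m\mathbb{1}\{f(x_i)\neq y_i\}$. An ERM $\hat f$ is any minimizer of $\hat R(\cdot,S_m)$ over $\mathcal{F}$; a true risk minimizer $f^*$ is any minimizer of $R$ over $\mathcal{F}$ (assumed to exist, possibly not unique). Slack functions: $A=A(m,\delta)=4d\ln\frac{16me}{d\delta}$; $\hat\sigma_{R-\hat R}(m,\delta,d,\hat r)=\frac{A}{m}+\sqrt{\frac{A}{m}\hat r}$, $\bar\sigma_{R-\hat R}(m,\delta,d,r)=\sqrt{\frac{A}{m}r}$, $\bar\sigma_{\hat R-R}(m,\delta,d,r)=\frac{A}{m}+\sqrt{\frac{A}{m}r}$, $\hat\sigma_{\hat R-R}(m,\delta,d,\hat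 r)=\sqrt{\frac{A}{m}\hat r}$; $\sigma_{R-\hat R}(m,\delta,d,r,\hat r)=\min\{\hat\sigma_{R-\hat R}(m,\delta,d,\hat r),\bar\sigma_{R-\hat R}(m,\delta,d,r)\}$ and $\sigma_{\hat R-R}(m,\delta,d,r,\hat r)=\min\{\bar\sigma_{\hat R-R}(m,\delta,d,r),\hat\sigma_{\hat R-R}(m,\delta,d,\hat r)\}$. Event $\mathcal{E}$: for every $f\in\mathcal{F}$ simultaneously, $R(f)\le\hat R(f,S_m)+\sigma_{R-\hat R}(m,\delta,d,R(f),\hat R(f,S_m))$ and $\hat R(f,S_m)\le R(f)+\sigma_{\hat R-R}(m,\delta,d,R(f),\hat R(f,S_m))$; $\mathcal{E}$ has probability at least $1-\delta$. For $G\subseteq\mathcal{F}$, $DIS(G)=\{x:\exists f_1,f_2\in G,\ f_1(x)\neq f_2(x)\}$. ILESS on $(S_m,\delta,\mathcal{F},d)$: take an ERM $\hat f$; set $\sigma_{\rm ILESS}=\hat\sigma_{R-\hat R}(m,\delta,d,\hat R(\hat f,S_m))+\bar\sigma_{\hat R-R}\big(m,\delta,d,\hat R(\hat f,S_m)+\hat\sigma_{R-\hat R}(m,\delta,d,\hat R(\hat f,S_m))\big)$; set $G=\{f\in\mathcal{F}:\hat R(f,S_m)\le\hat R(\hat f,S_m)+\sigma_{\rm ILESS}\}$; output the selective classifier $(\hat f,g)$ with $g(x)=1$ iff $x\notin DIS(G)$. A selective classifier $(h,g)$ (with $h\in\mathcal F$, $g:\mathcal X\to\{0,1\}$; it predicts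 $h(x)$ if $g(x)=1$ and abstains otherwise) is pointwise-competitive if for every $x$ with $g(x)=1$, $h(x)=f^*(x)$ for all true risk minimizers $f^*$. *)

From mathcomp Require Import all_boot all_order all_algebra.
From mathcomp Require Import all_classical all_reals all_analysis.
Set Implicit Arguments. Unset Strict Implicit. Unset Printing Implicit Defensive.
Import Order.TTheory GRing.Theory Num.Theory.
Local Open Scope classical_set_scope.
Local Open Scope ring_scope.

(* Labels Y = {+1,-1} are encoded as bool (true = +1, false = -1). *)

Section ILESS.
Context {R : realType} {dX : measure_display} {X : measurableType dX}.

Definition shatters (F : set (X -> bool)) (C : seq X) : Prop :=
  uniq C /\ forall lab : X -> bool, exists2 f, F f & forall x, x \in C -> f x = lab x.

Definition VCdim (F : set (X -> bool)) (d : nat) : Prop :=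
  (exists C, size C = d /\ shatters F C) /\
  (forall C, shatters F C -> (size C <= d)%N).

Definition risk (P : probability (X * bool)%type R) (f : X -> bool) : R :=
  fine (P [set z | f z.1 != z.2]).

Definition emp_risk (S : seq (X * bool)) (f : X -> bool) : R :=
  (size S)%:R^-1 * \sum_(z <- S) (f z.1 != z.2)%:R.

Definition Aslack (m : nat) (delta : R) (d : nat) : R :=
  4 * d%:R * ln (16 * m%:R * expR 1 / (d%:R * delta)).

Definition hsig_RmhR m delta d (hr : R) :=
  Aslack m delta d / m%:R + Num.sqrt (Aslack m delta d / m%:R * hr).
Definition bsig_RmhR m delta d (r : R) :=
  Num.sqrt (Aslack m delta d / m%:R * r).
Definition bsig_hRmR m delta d (r : R) :=
  Aslack m delta d / m%:R + Num.sqrt (Aslack m delta d / m%:R * r).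
Definition hsig_hRmR m delta d (hr : R) :=
  Num.sqrt (Aslack m delta d / m%:R * hr).

Definition sig_RmhR m delta d (r hr : R) :=
  Num.min (hsig_RmhR m delta d hr) (bsig_RmhR m delta d r).
Definition sig_hRmR m delta d (r hr : R) :=
  Num.min (bsig_hRmR m delta d r) (hsig_hRmR m delta d hr).

Definition event_E (P : probability (X * bool)%type R) (F : set (X -> bool))
    (S : seq (X * bool)) (m : nat) (delta : R) (d : nat) : Prop :=
  forall f, F f ->
    risk P f <= emp_risk S f + sig_RmhR m delta d (risk P f) (emp_risk S f) /\
    emp_risk S f <= risk P f + sig_hRmR m delta d (risk P f) (emp_risk S f).

Definition is_ERM (F : set (X -> bool)) (S : seq (X * bool)) (f : X -> bool) :=
  F f /\ forall g, F g -> emp_risk S f <= emp_risk S g.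

Definition is_true_risk_min (P : probability (X * bool)%type R)
    (F : set (X -> bool)) (f : X -> bool) :=
  F f /\ forall g, F g -> risk P f <= risk P g.

Definition sigma_ILESS (m : nat) (delta : R) (d : nat) (hr : R) : R :=
  hsig_RmhR m delta d hr + bsig_hRmR m delta d (hr + hsig_RmhR m delta d hr).

Definition ILESS_G (F : set (X -> bool)) (S : seq (X * bool)) (m : nat)
    (delta : R) (d : nat) (fhat : X -> bool) : set (X -> bool) :=
  [set f | F f /\ emp_risk S f <=
     emp_risk S fhat + sigma_ILESS m delta d (emp_risk S fhat)].

Definition DIS (G : set (X -> bool)) : set X :=
  [set x | exists f1 f2, G f1 /\ G f2 /\ f1 x != f2 x].

Definition ILESS_g (G : set (X -> bool)) (x : X) : bool := `[< ~ DIS G x >].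

Definition pointwise_competitive (P : probability (X * bool)%type R)
    (F : set (X -> bool)) (h : X -> bool) (g : X -> bool) : Prop :=
  forall x, g x -> forall fstar, is_true_risk_min P F fstar -> h x = fstar x.

End ILESS.

From mathcomp Require Import all_boot all_order all_algebra.
From mathcomp Require Import all_classical all_reals all_analysis.
Import Order.TTheory GRing.Theory Num.Theory.
Set Implicit Arguments. Unset Strict Implicit. Unset Printing Implicit Defensive.
Local Open Scope classical_set_scope.
Local Open Scope ring_scope.

(* Let fstar be a true risk minimizer.  On the event E,
   R(fhat) <= hR(fhat) + hsig_RmhR(hR(fhat)) =: B, so R(fstar) <= R(fhat) <= B
   and hR(fstar) <= R(fstar) + bsig_hRmR(R(fstar)) <= B + bsig_hRmR(B), which
   is hR(fhat) + sigma_ILESS, because bsig_hRmR is nondecreasing on [0, +oo).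
   Hence fstar lies in G, and so does fhat, whose empirical risk is at most
   that of fstar.  Two members of G agree outside DIS(G). *)

Lemma ler_sqrt_mul (R : rcfType) (a r1 r2 : R) :
  0 <= r1 -> r1 <= r2 -> Num.sqrt (a * r1) <= Num.sqrt (a * r2).
Proof.
move=> r1_ge0 r12; have [a_ge0 | a_lt0] := leP 0 a.
  by apply: ler_wsqrtr; apply: ler_wpM2l.
have -> : Num.sqrt (a * r1) = 0.
  by apply/eqP; rewrite sqrtr_eq0 mulr_le0_ge0 // ltW.
exact: sqrtr_ge0.
Qed.

Lemma ler_bsig_hRmR (R : realType) m (delta : R) d (r1 r2 : R) :
  0 <= r1 -> r1 <= r2 -> bsig_hRmR m delta d r1 <= bsig_hRmR m delta d r2.
Proof. by move=> r1_ge0 r12; rewrite lerD2l ler_sqrt_mul. Qed.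

Section EventE.
Context {R : realType} {dX : measure_display} {X : measurableType dX}.
Variables (P : probability (X * bool)%type R) (F : set (X -> bool)).
Variables (S : seq (X * bool)) (m : nat) (delta : R) (d : nat).

Lemma risk_ge0 (f : X -> bool) : 0 <= risk P f.
Proof. by rewrite /risk fine_ge0 // measure_ge0. Qed.

Hypothesis E : event_E P F S m delta d.

Lemma event_E_risk_le f : F f ->
  risk P f <= emp_risk S f + hsig_RmhR m delta d (emp_risk S f).
Proof.
move=> Ff; apply: le_trans (proj1 (E Ff)) _.
by rewrite lerD2l /sig_RmhR ge_min lexx.
Qed.

Lemma event_E_emp_risk_le f : F f ->
  emp_risk S f <= risk P f + bsig_hRmR m delta d (risk P f).
Proof.
move=> Ff; apply: le_trans (proj2 (E Ff)) _.
by rewrite lerD2l /sig_hRmR ge_min lexx.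
Qed.

Variable fhat : X -> bool.
Hypothesis ERM_fhat : @is_ERM R _ X F S fhat.

Lemma true_risk_min_ILESS_G fstar :
  is_true_risk_min P F fstar -> ILESS_G F S m delta d fhat fstar.
Proof.
case: ERM_fhat => Ffhat _ [Ffstar risk_min]; split=> //.
set B := emp_risk S fhat + hsig_RmhR m delta d (emp_risk S fhat).
have risk_fstar_le : risk P fstar <= B.
  exact: le_trans (risk_min _ Ffhat) (event_E_risk_le Ffhat).
rewrite /sigma_ILESS addrA -/B.
apply: le_trans (event_E_emp_risk_le Ffstar) (lerD risk_fstar_le _).
exact: ler_bsig_hRmR (risk_ge0 _) risk_fstar_le.
Qed.

Lemma ERM_ILESS_G fstar :
  is_true_risk_min P F fstar -> ILESS_G F S m delta d fhat fhat.
Proof.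
move=> fstar_min; have [Ffhat ERM] := ERM_fhat; split=> //.
apply: le_trans (proj2 (true_risk_min_ILESS_G fstar_min)).
exact: ERM (proj1 fstar_min).
Qed.

End EventE.

Lemma ILESS_g_agree {dX : measure_display} {X : measurableType dX}
    (G : set (X -> bool)) (f1 f2 : X -> bool) x :
  G f1 -> G f2 -> ILESS_g G x -> f1 x = f2 x.
Proof.
move=> Gf1 Gf2 /asboolP notDIS; apply/eqP/negPn/negP => neq.
by apply: notDIS; exists f1, f2.
Qed.

Theorem lemma3 (R : realType) (dX : measure_display) (X : measurableType dX)
  (F : set (X -> bool)) (d : nat) (P : probability (X * bool)%type R)
  (m : nat) (S : seq (X * bool)) (delta : R) (fhat : X -> bool) :
  VCdim F d ->
  size S = m -> (0 < m)%N ->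
  0 < delta < 1 ->
  @is_ERM R _ X F S fhat ->
  event_E P F S m delta d ->
  (forall fstar, is_true_risk_min P F fstar ->
     @ILESS_G R _ X F S m delta d fhat fstar) /\
  pointwise_competitive P F fhat (ILESS_g (@ILESS_G R _ X F S m delta d fhat)).
Proof.
(* The VC dimension, the sample size and delta only matter for Pr[E]. *)
move=> _ _ _ _ ERM_fhat E.
have fstar_in_G := true_risk_min_ILESS_G E ERM_fhat.
split=> // x gx fstar fstar_min.
have fhat_in_G := ERM_ILESS_G E ERM_fhat fstar_min.
exact: ILESS_g_agree fhat_in_G (fstar_in_G _ fstar_min) gx.
Qed.
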